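(* Let $d\ge1$, $N=2^d$, $Q\ge 1$, and let $\Omega=\{(x,y,m):0\le x\le 1,\ 0<m\le y\le Qm\}$. Say a function $B:\Omega\to\mathbb{R}$ satisfies the main inequality at level $m$ if \[ B(x,y,m)\ge \frac1N\sum_{i=1}^N B(x_i,y_i,m_i) \] whenever $(x,y,m)\in\Omega$, $(x_i,y_i,m_i)\in\Omega$ for $i=1,\dots,N$, $\frac1N\sum x_i=x$, $\frac1N\sum y_i=y$ and $\min_i m_i=m$. Suppose $B$ satisfies the main inequality at level $m=1$ and the homogeneity property $B(x,\lambda y,\lambda m)=\lambda B(x,y,m)$ for all $\lambda>0$ and $(x,y,m)\in\Omega$. Then $B$ satisfies the main inequality at every level $m>0$. *)

From Stdlib Require Import Reals Lra.
Open Scope R_scope.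

Definition InOmega (Q x y m : R) : Prop :=
  0 <= x <= 1 /\ 0 < m /\ m <= y /\ y <= Q * m.

(* Finite average of f 0, ..., f (N-1), for N >= 1. *)
Definition avg (N : nat) (f : nat -> R) : R :=
  (/ INR N) * sum_f_R0 f (N - 1).

Definition is_min_on (N : nat) (ms : nat -> R) (m : R) : Prop :=
  (forall i, (i < N)%nat -> m <= ms i) /\ (exists i, (i < N)%nat /\ ms i = m).

Definition main_ineq_at (d : nat) (Q : R) (B : R -> R -> R -> R) (m : R) : Prop :=
  let N := (2 ^ d)%nat in
  forall (x y : R) (xs ys ms : nat -> R),
    InOmega Q x y m ->
    (forall i, (i < N)%nat -> InOmega Q (xs i) (ys i) (ms i)) ->
    avg N xs = x ->
    avg N ys = y ->
    is_min_on N ms m ->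
    B x y m >= avg N (fun i => B (xs i) (ys i) (ms i)).

From Stdlib Require Import Reals Lra Lia.
Open Scope R_scope.

(* Scaling the last two coordinates by [1/m] reduces the main inequality at level [m]
   to level [1]; homogeneity carries the value of [B] and the average along, since
   averaging commutes with multiplication by a constant. *)

Definition homogeneous (Q : R) (B : R -> R -> R -> R) : Prop :=
  forall lambda x y m, 0 < lambda -> InOmega Q x y m ->
    B x (lambda * y) (lambda * m) = lambda * B x y m.

Lemma avg_mult_r (N : nat) (f : nat -> R) (c : R) :
  avg N (fun i => f i * c) = avg N f * c.
Proof. unfold avg; rewrite <- scal_sum; ring. Qed.

Lemma avg_ext (N : nat) (f g : nat -> R) :
  (0 < N)%nat -> (forall i, (i < N)%nat -> f i = g i) -> avg N f = avg N g.
Proof.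
  intros HN Hfg; unfold avg; f_equal.
  apply sum_eq; intros i Hi; apply Hfg; lia.
Qed.

Lemma InOmega_scale (Q x y m c : R) :
  0 < c -> InOmega Q x y m -> InOmega Q x (c * y) (c * m).
Proof.
  intros Hc (Hx & Hm & Hmy & HyQ); unfold InOmega.
  repeat split; try lra.
  - now apply Rmult_lt_0_compat.
  - now apply Rmult_le_compat_l; lra.
  - replace (Q * (c * m)) with (c * (Q * m)) by ring.
    now apply Rmult_le_compat_l; lra.
Qed.

Lemma is_min_on_scale (N : nat) (ms : nat -> R) (m c : R) :
  0 < c -> is_min_on N ms m -> is_min_on N (fun i => c * ms i) (c * m).
Proof.
  intros Hc [Hle [i [Hi Hmi]]]; split.
  - intros j Hj; apply Rmult_le_compat_l; [lra | auto].
  - exists i; split; [exact Hi | now rewrite Hmi].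
Qed.

Lemma main_ineq_at_scale (d : nat) (Q : R) (B : R -> R -> R -> R) (m lambda : R) :
  homogeneous Q B -> 0 < lambda ->
  main_ineq_at d Q B m -> main_ineq_at d Q B (lambda * m).
Proof.
  intros Hhom Hlam Hm x y xs ys ms Hxy Hpts Hax Hay Hmin.
  set (N := (2 ^ d)%nat) in *.
  assert (HN : (0 < N)%nat) by (apply Nat.neq_0_lt_0, Nat.pow_nonzero; lia).
  assert (Hinv : 0 < / lambda) by now apply Rinv_0_lt_compat.
  assert (Hunscale : forall t, / lambda * (lambda * t) = t)
    by (intro t; field; lra).
  assert (Hrescale : forall t, lambda * (/ lambda * t) = t)
    by (intro t; field; lra).
  assert (Hxy1 : InOmega Q x (/ lambda * y) m).
  { rewrite <- (Hunscale m); now apply InOmega_scale. }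
  assert (Hpts1 : forall i, (i < N)%nat ->
            InOmega Q (xs i) (/ lambda * ys i) (/ lambda * ms i))
    by (intros i Hi; now apply InOmega_scale, Hpts).
  assert (Hay1 : avg N (fun i => / lambda * ys i) = / lambda * y).
  { rewrite <- Hay, Rmult_comm, <- avg_mult_r.
    apply avg_ext; [exact HN | intros; ring]. }
  assert (Hmin1 : is_min_on N (fun i => / lambda * ms i) m).
  { rewrite <- (Hunscale m); now apply is_min_on_scale. }
  specialize (Hm _ _ _ _ _ Hxy1 Hpts1 Hax Hay1 Hmin1); fold N in Hm.
  assert (HB : B x y (lambda * m) = lambda * B x (/ lambda * y) m).
  { rewrite <- Hhom by assumption; now rewrite Hrescale. }
  assert (Havg : avg N (fun i => B (xs i) (ys i) (ms i))
                 = avg N (fun i => B (xs i) (/ lambda * ys i) (/ lambda * ms i))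
                   * lambda).
  { rewrite <- avg_mult_r; apply avg_ext; [exact HN | intros i Hi].
    rewrite Rmult_comm, <- Hhom by auto; now rewrite !Hrescale. }
  rewrite HB, Havg, (Rmult_comm _ lambda).
  apply Rle_ge, Rmult_le_compat_l; lra.
Qed.

Theorem mainTheorem3 (d : nat) (Q : R) (B : R -> R -> R -> R) :
  (1 <= d)%nat ->
  1 <= Q ->
  main_ineq_at d Q B 1 ->
  (forall (lambda x y m : R), 0 < lambda -> InOmega Q x y m ->
     B x (lambda * y) (lambda * m) = lambda * B x y m) ->
  forall m : R, 0 < m -> main_ineq_at d Q B m.
Proof.
  intros _ _ Hlevel1 Hhom m Hm.
  rewrite <- (Rmult_1_r m).
  now apply main_ineq_at_scale.
Qed.
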